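(* Let $(a_n)_{n\ge1}$ be a complex sequence with $a_1\ne0$ and $\sum_n|a_n|n^{\epsilon}<\infty$ for some $\epsilon>0$, and suppose its convolution inverse $(b_n)$ satisfies $\sum_n|b_n|/\sqrt n<\infty$. Assume moreover that there are constants $C_0,C_1,N$ such that $$\left|\frac{L(1/2-y+ix;a_n)}{L(1/2+y+ix;a_n)}\right|\le C_0+C_1|x|^N$$ for all $x,y\in\mathbb R$ with $|y|\le1/2+\epsilon/2$. Then for every $f\in\mathcal S_0$, $\mathcal F(a_n)f\in\mathrm{Dom}(B)$ and $\mathcal F(a_n)Bf+B\mathcal F(a_n)f=0$.
   Context: $T(a_n)f(x)=\sum_{n\ge1}a_nf(nx)$ ($x>0$), extended to a bounded operator on $L^2[0,\infty)$ when $\sum|a_n|/\sqrt n<\infty$. The convolution inverse of $(a_n)$ is the unique $(b_n)$ with $\sum_{mn=k}a_mb_n=1$ for $k=1$ and $0$ for $k>1$. $Sf(x)=\frac1xf(1/x)$. $\mathcal F(a_n)=T(\overline{b_n})ST(a_n)$. $L(s;a_n)=\sum_{n\ge1}a_nn^{-s}$. $B$ is the unbounded operator on $L^2[0,\infty)$ given by $Bf(x)=i\,(xf'(x)+f(x)/2)$ with domain $\mathrm{Dom}(B)=\{f\in C^\infty(0,\infty)\cap L^2: xf'+f/2\in L^2\}$. $\mathcal S_0=\{f\in C^\infty(0,\infty):\sup_{x>0}x^n|f^{(k)}(x)|<\infty\text{ for all }k\ge0,\ n\in\mathbb Z\}$. *)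

From Stdlib Require Import Reals ZArith Arith.
Open Scope R_scope.

Record Cplx := mkC { Cre : R; Cim : R }.
Definition Czero : Cplx := mkC 0 0.
Definition Cone : Cplx := mkC 1 0.
Definition Ci : Cplx := mkC 0 1.
Definition Cadd (z w : Cplx) : Cplx := mkC (Cre z + Cre w) (Cim z + Cim w).
Definition Copp (z : Cplx) : Cplx := mkC (- Cre z) (- Cim z).
Definition Csub (z w : Cplx) : Cplx := Cadd z (Copp w).
Definition Cmul (z w : Cplx) : Cplx :=
  mkC (Cre z * Cre w - Cim z * Cim w) (Cre z * Cim w + Cim z * Cre w).
Definition Cscal (r : R) (z : Cplx) : Cplx := mkC (r * Cre z) (r * Cim z).
Definition Cconj (z : Cplx) : Cplx := mkC (Cre z) (- Cim z).
Definition Cnorm (z : Cplx) : R := sqrt (Cre z ^ 2 + Cim z ^ 2).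
Definition Cinv (z : Cplx) : Cplx :=
  mkC (Cre z / (Cre z ^ 2 + Cim z ^ 2)) (- Cim z / (Cre z ^ 2 + Cim z ^ 2)).
Definition Cdiv (z w : Cplx) : Cplx := Cmul z (Cinv w).
Definition Cexp (z : Cplx) : Cplx := mkC (exp (Cre z) * cos (Cim z)) (exp (Cre z) * sin (Cim z)).

(* n^{-s} = exp(-s log n), for n >= 1 *)
Definition npow_neg (n : nat) (s : Cplx) : Cplx := Cexp (Cscal (- ln (INR n)) s).

Fixpoint Csum_to (u : nat -> Cplx) (N : nat) : Cplx :=
  match N with
  | O => Czero
  | S N' => Cadd (Csum_to u N') (u N)
  end.

Definition Cseries_lim (u : nat -> Cplx) (l : Cplx) : Prop :=
  forall e, 0 < e -> exists N0, forall N, (N0 <= N)%nat -> Cnorm (Csub (Csum_to u N) l) < e.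

(* sum_{n>=1} u n < infinity, for a sequence of nonnegative reals u *)
Definition abs_summable (u : nat -> R) : Prop :=
  exists M, forall N, sum_f_R0 (fun k => u (S k)) N <= M.

(* Dirichlet convolution (a*b)_k = sum_{mn=k} a_m b_n, k >= 1 *)
Definition dirichlet_conv (a b : nat -> Cplx) (k : nat) : Cplx :=
  Csum_to (fun d => if Nat.eqb (Nat.modulo k d) 0 then Cmul (a d) (b (Nat.div k d)) else Czero) k.

Definition is_conv_inverse (a b : nat -> Cplx) : Prop :=
  forall k, (1 <= k)%nat -> dirichlet_conv a b k = (if Nat.eqb k 1 then Cone else Czero).

Definition LS (a : nat -> Cplx) (s : Cplx) (l : Cplx) : Prop :=
  Cseries_lim (fun n => Cmul (a n) (npow_neg n s)) l.

Definition is_derivs (f : R -> Cplx) (D : nat -> R -> Cplx) : Prop :=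
  (forall x, 0 < x -> D O x = f x) /\
  (forall k x, 0 < x ->
     derivable_pt_lim (fun t => Cre (D k t)) x (Cre (D (S k) x)) /\
     derivable_pt_lim (fun t => Cim (D k t)) x (Cim (D (S k) x))).

Definition in_S0 (f : R -> Cplx) (D : nat -> R -> Cplx) : Prop :=
  is_derivs f D /\
  forall (k : nat) (n : Z), exists M, forall x, 0 < x -> powerRZ x n * Cnorm (D k x) <= M.

(* int_0^oo |h|^2 <= M, as an improper Riemann integral *)
Definition L2norm2_le (h : R -> Cplx) (M : R) : Prop :=
  forall lo hi, 0 < lo -> lo <= hi ->
    exists pr : Riemann_integrable (fun x => Cnorm (h x) ^ 2) lo hi, RiemannInt pr <= M.

Definition inL2 (h : R -> Cplx) : Prop := exists M, L2norm2_le h M.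

Definition L2conv (hN : nat -> R -> Cplx) (h : R -> Cplx) : Prop :=
  forall e, 0 < e -> exists N0, forall N, (N0 <= N)%nat ->
    L2norm2_le (fun x => Csub (hN N x) (h x)) e.

(* partial sums of T(c)h(x) = sum_{n>=1} c_n h(nx) *)
Definition Tpart (c : nat -> Cplx) (h : R -> Cplx) (M : nat) (x : R) : Cplx :=
  Csum_to (fun n => Cmul (c n) (h (INR n * x))) M.

Definition T_pointwise (c : nat -> Cplx) (h g : R -> Cplx) : Prop :=
  forall x, 0 < x -> Cseries_lim (fun n => Cmul (c n) (h (INR n * x))) (g x).

Definition opS (h : R -> Cplx) (x : R) : Cplx := Cscal (/ x) (h (/ x)).

Definition opB (f : R -> Cplx) (D : nat -> R -> Cplx) (x : R) : Cplx :=
  Cmul Ci (Cadd (Cscal x (D 1%nat x)) (Cscal (/ 2) (f x))).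

Definition conj_seq (b : nat -> Cplx) (n : nat) : Cplx := Cconj (b n).

(* F(a_n) f = T(conj b) S T(a) f equals v in L^2 (T(conj b) being the bounded
   L^2 operator, given by the L^2-convergent series of its partial sums) *)
Definition is_F_image (a b : nat -> Cplx) (f v : R -> Cplx) : Prop :=
  exists g, T_pointwise a f g /\ L2conv (Tpart (conj_seq b) (opS g)) v.

(* The proof is a dilation calculus.
   (1) B commutes with dilations h |-> h(lam .), and S B = - B S on S_0.
   (2) S T(a) f (y) = sum_n (a_n / n) (S f)(y / n) is a series of dilates of S f in S_0,
       and u = T(conj b) (S T(a) f) is again a series of dilates.  Such dilation series
       converge locally uniformly together with all their term-wise derivatives, hence
       may be differentiated term by term; by (1), B u is the dilation series built
       from B (S f) = - S (B f).
   (3) T(c), with sum_m |c_m| / sqrt m < oo, maps functions bounded by K/(1+x) into L^2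
       with L^2-convergent partial sums (Cauchy-Schwarz and int_0^oo m/(1+mx)^2 <= 1).
   Running (2)-(3) for f and for B f in S_0 and comparing them through (1) gives
   F B f = - B F f. *)

From Stdlib Require Import Reals Arith Lra Lia Psatz List.
From Stdlib Require Import ClassicalEpsilon FunctionalExtensionality.
From Coquelicot Require Coquelicot.
Open Scope R_scope.

Lemma Cext z w : Cre z = Cre w -> Cim z = Cim w -> z = w.
Proof. destruct z, w; simpl; intros; subst; reflexivity. Qed.

Lemma Cnorm_nonneg z : 0 <= Cnorm z.
Proof. apply sqrt_pos. Qed.

Lemma Cnorm_sq z : Cnorm z ^ 2 = Cre z ^ 2 + Cim z ^ 2.
Proof. unfold Cnorm; rewrite pow2_sqrt; nra. Qed.

Lemma Cnorm_le_sq z a : 0 <= a -> Cre z ^ 2 + Cim z ^ 2 <= a ^ 2 -> Cnorm z <= a.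
Proof. intros Ha H. unfold Cnorm. rewrite <- (sqrt_pow2 a Ha). apply sqrt_le_1_alt; auto. Qed.

Lemma Cnorm_mul z w : Cnorm (Cmul z w) = Cnorm z * Cnorm w.
Proof. unfold Cnorm, Cmul; simpl. rewrite <- sqrt_mult by nra. f_equal. ring. Qed.

Lemma Cnorm_scal r z : Cnorm (Cscal r z) = Rabs r * Cnorm z.
Proof.
  unfold Cnorm, Cscal; simpl. rewrite <- sqrt_Rsqr_abs, <- sqrt_mult by (unfold Rsqr; nra).
  f_equal. unfold Rsqr; ring.
Qed.

Lemma Re_le z : Rabs (Cre z) <= Cnorm z.
Proof. unfold Cnorm. rewrite <- sqrt_Rsqr_abs. apply sqrt_le_1_alt. unfold Rsqr; nra. Qed.

Lemma Im_le z : Rabs (Cim z) <= Cnorm z.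
Proof. unfold Cnorm. rewrite <- sqrt_Rsqr_abs. apply sqrt_le_1_alt. unfold Rsqr; nra. Qed.

Lemma Cnorm_le_ReIm z : Cnorm z <= Rabs (Cre z) + Rabs (Cim z).
Proof.
  pose proof (Rabs_pos (Cre z)); pose proof (Rabs_pos (Cim z)).
  apply Cnorm_le_sq; [lra|]. rewrite <- (pow2_abs (Cre z)), <- (pow2_abs (Cim z)). nra.
Qed.

Lemma Cnorm_tri z w : Cnorm (Cadd z w) <= Cnorm z + Cnorm w.
Proof.
  pose proof (Cnorm_nonneg z); pose proof (Cnorm_nonneg w).
  apply Cnorm_le_sq; [lra|]. unfold Cadd; simpl.
  (* Cauchy-Schwarz in R^2 *)
  assert (Hcs : Cre z * Cre w + Cim z * Cim w <= Cnorm z * Cnorm w).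
  { unfold Cnorm. rewrite <- sqrt_mult by nra.
    apply Rle_trans with (Rabs (Cre z * Cre w + Cim z * Cim w)); [apply Rle_abs|].
    rewrite <- sqrt_Rsqr_abs. apply sqrt_le_1_alt. unfold Rsqr.
    pose proof (pow2_ge_0 (Cre z * Cim w - Cim z * Cre w)); nra. }
  pose proof (Cnorm_sq z); pose proof (Cnorm_sq w). nra.
Qed.

Lemma Cnorm_opp z : Cnorm (Copp z) = Cnorm z.
Proof. unfold Cnorm, Copp; simpl. f_equal. ring. Qed.

Lemma Cnorm_conj z : Cnorm (Cconj z) = Cnorm z.
Proof. unfold Cnorm, Cconj; simpl. f_equal. ring. Qed.

Lemma Cnorm_Ci z : Cnorm (Cmul Ci z) = Cnorm z.
Proof.
  rewrite Cnorm_mul. assert (H : Cre Ci ^ 2 + Cim Ci ^ 2 = 1) by (simpl; ring).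
  unfold Cnorm at 1; rewrite H, sqrt_1; ring.
Qed.

Lemma Cnorm_zero : Cnorm Czero = 0.
Proof.
  assert (H : Cre Czero ^ 2 + Cim Czero ^ 2 = 0) by (simpl; ring).
  unfold Cnorm; rewrite H; apply sqrt_0.
Qed.

Lemma Cnorm_sub_tri z w : Cnorm (Csub z w) <= Cnorm z + Cnorm w.
Proof. unfold Csub. rewrite <- (Cnorm_opp w). apply Cnorm_tri. Qed.

Lemma Cnorm_sub_sym z w : Cnorm (Csub z w) = Cnorm (Csub w z).
Proof. unfold Cnorm, Csub, Cadd, Copp; simpl. f_equal. ring. Qed.

Lemma Csub_tri3 x y z : Cnorm (Csub x z) <= Cnorm (Csub x y) + Cnorm (Csub y z).
Proof.
  replace (Csub x z) with (Cadd (Csub x y) (Csub y z)) by (apply Cext; simpl; ring).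
  apply Cnorm_tri.
Qed.

Lemma Cnorm_eq0 z : Cnorm z = 0 -> z = Czero.
Proof.
  intros H. pose proof (Re_le z); pose proof (Im_le z). rewrite H in *.
  assert (Habs0 : forall r, Rabs r <= 0 -> r = 0).
  { intros r Hr. pose proof (Rle_abs r); pose proof (Rle_abs (- r)). rewrite Rabs_Ropp in *. lra. }
  apply Cext; simpl; apply Habs0; auto.
Qed.

Fixpoint Rsum_to (u : nat -> R) (N : nat) : R :=
  match N with O => 0 | S N' => Rsum_to u N' + u N end.

Definition bounded_sums (w : nat -> R) : Prop := exists W, forall N, Rsum_to w N <= W.
Definition nonneg_terms (w : nat -> R) : Prop := forall n, (1 <= n)%nat -> 0 <= w n.

Lemma abs_summable_bounded u : nonneg_terms u -> abs_summable u -> bounded_sums u.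
Proof.
  intros Hn [M HM]. exists (Rmax 0 M). intros [|N]; [apply Rmax_l|].
  assert (Hsum : Rsum_to u (S N) = sum_f_R0 (fun k => u (S k)) N).
  { clear. induction N; [simpl; ring|]. cbn [Rsum_to sum_f_R0] in *. rewrite <- IHN. ring. }
  rewrite Hsum. eapply Rle_trans; [apply HM|apply Rmax_r].
Qed.

Lemma Rsum_mono w N P : nonneg_terms w -> (N <= P)%nat -> Rsum_to w N <= Rsum_to w P.
Proof.
  intros Hw HP. induction HP; [lra|]. cbn [Rsum_to]. pose proof (Hw (S m) ltac:(lia)). lra.
Qed.

Lemma Rsum_scal C w N : Rsum_to (fun n => C * w n) N = C * Rsum_to w N.
Proof. induction N; simpl; [ring|rewrite IHN; ring]. Qed.

Lemma Rsum_le v w N : (forall n, (1 <= n)%nat -> v n <= w n) -> Rsum_to v N <= Rsum_to w N.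
Proof. intros H. induction N; simpl; [lra|]. pose proof (H (S N) ltac:(lia)). lra. Qed.

Lemma bounded_sums_cv w : nonneg_terms w -> bounded_sums w -> exists Wl, Un_cv (Rsum_to w) Wl.
Proof.
  intros Hw [W HW]. destruct (growing_cv (Rsum_to w)) as [l Hl].
  - intro n. simpl. pose proof (Hw (S n) ltac:(lia)). lra.
  - exists W. intros x [n ->]. apply HW.
  - exists l; exact Hl.
Qed.

Lemma Rsum_le_limit w Wl N : nonneg_terms w -> Un_cv (Rsum_to w) Wl -> Rsum_to w N <= Wl.
Proof.
  intros Hw Hl. apply Rnot_lt_le; intro Hc.
  destruct (Hl (Rsum_to w N - Wl)) as [N0 HN0]; [lra|].
  specialize (HN0 (max N N0) ltac:(lia)). unfold Rdist in HN0.
  pose proof (Rsum_mono w N (max N N0) Hw ltac:(lia)).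
  rewrite Rabs_right in HN0; lra.
Qed.

Lemma Un_cv_scal u l C : Un_cv u l -> Un_cv (fun n => C * u n) (C * l).
Proof. intros H. apply (CV_mult (fun _ => C) u C l); [|exact H]. intros e He. exists O. intros. unfold Rdist. rewrite Rminus_diag, Rabs_R0. exact He. Qed.

Lemma Csum_to_norm u N : Cnorm (Csum_to u N) <= Rsum_to (fun n => Cnorm (u n)) N.
Proof.
  induction N; simpl; [rewrite Cnorm_zero; lra|]. eapply Rle_trans; [apply Cnorm_tri|lra].
Qed.

Lemma Csum_block_bound u w N P : (forall n, (1 <= n)%nat -> Cnorm (u n) <= w n) -> (N <= P)%nat ->
  Cnorm (Csub (Csum_to u P) (Csum_to u N)) <= Rsum_to w P - Rsum_to w N.
Proof.
  intros Hu HP. induction HP.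
  - replace (Csub (Csum_to u N) (Csum_to u N)) with Czero by (apply Cext; simpl; ring).
    rewrite Cnorm_zero; lra.
  - cbn [Csum_to Rsum_to].
    replace (Csub (Cadd (Csum_to u m) (u (S m))) (Csum_to u N))
      with (Cadd (Csub (Csum_to u m) (Csum_to u N)) (u (S m))) by (apply Cext; simpl; ring).
    eapply Rle_trans; [apply Cnorm_tri|]. pose proof (Hu (S m) ltac:(lia)). lra.
Qed.

Lemma Csum_cauchy u w n m : (forall n, (1 <= n)%nat -> Cnorm (u n) <= w n) ->
  Cnorm (Csub (Csum_to u n) (Csum_to u m)) <= Rabs (Rsum_to w n - Rsum_to w m).
Proof.
  intros Hu. destruct (le_lt_dec m n).
  - eapply Rle_trans; [apply Csum_block_bound; eauto|apply Rle_abs].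
  - rewrite Cnorm_sub_sym, Rabs_minus_sym.
    eapply Rle_trans; [apply (Csum_block_bound u w n m); auto; lia|apply Rle_abs].
Qed.

Lemma series_comparison u w : (forall n, (1 <= n)%nat -> Cnorm (u n) <= w n) ->
  nonneg_terms w -> bounded_sums w -> exists l, Cseries_lim u l.
Proof.
  intros Hu Hw Hb. destruct (bounded_sums_cv w Hw Hb) as [Wl HWl].
  assert (HC : Cauchy_crit (Rsum_to w)) by (apply CV_Cauchy; exists Wl; exact HWl).
  assert (Hpart : forall (p : Cplx -> R), (forall z, Rabs (p z) <= Cnorm z) ->
            (forall z w, p (Csub z w) = p z - p w) -> Cauchy_crit (fun n => p (Csum_to u n))).
  { intros p Hp Hsub e He. destruct (HC e He) as [N HN]. exists N. intros n m Hn Hm.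
    specialize (HN n m Hn Hm). unfold Rdist in *. rewrite <- Hsub.
    eapply Rle_lt_trans; [|exact HN]. eapply Rle_trans; [apply Hp|apply Csum_cauchy; auto]. }
  destruct (R_complete _ (Hpart Cre Re_le (fun z w => eq_refl))) as [lr Hlr].
  destruct (R_complete _ (Hpart Cim Im_le (fun z w => eq_refl))) as [li Hli].
  exists (mkC lr li). intros e He.
  destruct (Hlr (e/2)) as [N1 HN1]; [lra|]. destruct (Hli (e/2)) as [N2 HN2]; [lra|].
  exists (max N1 N2). intros N HN.
  specialize (HN1 N ltac:(lia)). specialize (HN2 N ltac:(lia)). unfold Rdist in *.
  eapply Rle_lt_trans; [apply Cnorm_le_ReIm|]. simpl. unfold Rminus in *. lra.
Qed.

Lemma series_tail u w l Wl : (forall n, (1 <= n)%nat -> Cnorm (u n) <= w n) -> nonneg_terms w ->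
  Cseries_lim u l -> Un_cv (Rsum_to w) Wl ->
  forall N, Cnorm (Csub l (Csum_to u N)) <= Wl - Rsum_to w N.
Proof.
  intros Hu Hw Hl HW N. apply Rnot_lt_le; intro Hc.
  set (d := Cnorm (Csub l (Csum_to u N)) - (Wl - Rsum_to w N)).
  destruct (Hl d) as [N0 HN0]; [unfold d; lra|].
  specialize (HN0 (max N N0) ltac:(lia)).
  pose proof (Csum_block_bound u w N (max N N0) Hu ltac:(lia)).
  pose proof (Rsum_le_limit w Wl (max N N0) Hw HW).
  pose proof (Csub_tri3 l (Csum_to u (max N N0)) (Csum_to u N)).
  rewrite Cnorm_sub_sym in HN0. unfold d in *. lra.
Qed.

Lemma series_norm_bound u v l M : Cseries_lim u l ->
  (forall n, (1 <= n)%nat -> Cnorm (u n) <= v n) -> (forall N, Rsum_to v N <= M) -> Cnorm l <= M.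
Proof.
  intros Hl Hu HM. apply Rnot_lt_le; intro Hc.
  destruct (Hl (Cnorm l - M)) as [N0 HN0]; [lra|].
  specialize (HN0 N0 (le_n _)).
  pose proof (Csum_to_norm u N0). pose proof (Rsum_le _ _ N0 Hu). pose proof (HM N0).
  pose proof (Csub_tri3 l (Csum_to u N0) Czero).
  replace (Csub l Czero) with l in * by (apply Cext; simpl; ring).
  replace (Csub (Csum_to u N0) Czero) with (Csum_to u N0) in * by (apply Cext; simpl; ring).
  rewrite Cnorm_sub_sym in HN0. lra.
Qed.

Lemma series_unique u l1 l2 : Cseries_lim u l1 -> Cseries_lim u l2 -> l1 = l2.
Proof.
  intros H1 H2.
  assert (H : Cnorm (Csub l1 l2) = 0).
  { apply Rle_antisym; [|apply Cnorm_nonneg]. apply Rnot_lt_le; intro Hc.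
    destruct (H1 (Cnorm (Csub l1 l2) / 2)) as [N1 HN1]; [lra|].
    destruct (H2 (Cnorm (Csub l1 l2) / 2)) as [N2 HN2]; [lra|].
    specialize (HN1 (max N1 N2) ltac:(lia)). specialize (HN2 (max N1 N2) ltac:(lia)).
    pose proof (Csub_tri3 l1 (Csum_to u (max N1 N2)) l2). rewrite Cnorm_sub_sym in HN1. lra. }
  apply Cnorm_eq0 in H. apply Cext; [apply (f_equal Cre) in H|apply (f_equal Cim) in H];
    simpl in H; lra.
Qed.

Lemma Csum_ext u v N : (forall n, (1 <= n)%nat -> u n = v n) -> Csum_to u N = Csum_to v N.
Proof. intros H. induction N; [reflexivity|]. simpl. rewrite IHN, H by lia. reflexivity. Qed.

Lemma series_ext u v l : (forall n, (1 <= n)%nat -> u n = v n) -> Cseries_lim u l -> Cseries_lim v l.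
Proof.
  intros H Hl e He. destruct (Hl e He) as [N0 HN]. exists N0. intros N HN'.
  rewrite <- (Csum_ext u v N H). auto.
Qed.

Lemma series_add u v l m : Cseries_lim u l -> Cseries_lim v m ->
  Cseries_lim (fun n => Cadd (u n) (v n)) (Cadd l m).
Proof.
  intros Hu Hv e He. destruct (Hu (e/2)) as [N1 H1]; [lra|]. destruct (Hv (e/2)) as [N2 H2]; [lra|].
  exists (max N1 N2). intros N HN.
  assert (Hsum : Csum_to (fun n => Cadd (u n) (v n)) N = Cadd (Csum_to u N) (Csum_to v N)).
  { clear. induction N; [apply Cext; simpl; ring|]. simpl. rewrite IHN. apply Cext; simpl; ring. }
  rewrite Hsum. replace (Csub (Cadd (Csum_to u N) (Csum_to v N)) (Cadd l m))
    with (Cadd (Csub (Csum_to u N) l) (Csub (Csum_to v N) m)) by (apply Cext; simpl; ring).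
  eapply Rle_lt_trans; [apply Cnorm_tri|].
  specialize (H1 N ltac:(lia)). specialize (H2 N ltac:(lia)). lra.
Qed.

Lemma series_cmul z u l : Cseries_lim u l -> Cseries_lim (fun n => Cmul z (u n)) (Cmul z l).
Proof.
  intros Hu e He. pose proof (Cnorm_nonneg z).
  destruct (Hu (e / (Cnorm z + 1))) as [N1 H1]; [apply Rdiv_lt_0_compat; lra|].
  exists N1. intros N HN.
  assert (Hsum : Csum_to (fun n => Cmul z (u n)) N = Cmul z (Csum_to u N)).
  { clear. induction N; [apply Cext; simpl; ring|]. simpl. rewrite IHN. apply Cext; simpl; ring. }
  rewrite Hsum. replace (Csub (Cmul z (Csum_to u N)) (Cmul z l)) with (Cmul z (Csub (Csum_to u N) l))
    by (apply Cext; simpl; ring).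
  rewrite Cnorm_mul. specialize (H1 N HN).
  pose proof (Cnorm_nonneg (Csub (Csum_to u N) l)).
  apply Rle_lt_trans with ((Cnorm z + 1) * Cnorm (Csub (Csum_to u N) l)); [nra|].
  apply Rmult_lt_reg_l with (/ (Cnorm z + 1)); [apply Rinv_0_lt_compat; lra|].
  rewrite <- Rmult_assoc, Rinv_l by lra. lra.
Qed.

Lemma series_scal r u l : Cseries_lim u l -> Cseries_lim (fun n => Cscal r (u n)) (Cscal r l).
Proof.
  intros H. replace (Cscal r l) with (Cmul (mkC r 0) l) by (apply Cext; simpl; ring).
  eapply series_ext; [|apply (series_cmul (mkC r 0)); exact H].
  intros n _. apply Cext; simpl; ring.
Qed.

Lemma dpl_val f x l l' : derivable_pt_lim f x l -> l = l' -> derivable_pt_lim f x l'.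
Proof. intros H <-; exact H. Qed.

Lemma dpl_mult f g x lf lg : derivable_pt_lim f x lf -> derivable_pt_lim g x lg ->
  derivable_pt_lim (fun t => f t * g t) x (lf * g x + f x * lg).
Proof. intros. eapply derivable_pt_lim_ext; [|apply derivable_pt_lim_mult; eauto]. intros; reflexivity. Qed.

Lemma dpl_scal f a x l : derivable_pt_lim f x l -> derivable_pt_lim (fun t => a * f t) x (a * l).
Proof. intros. eapply derivable_pt_lim_ext; [|apply derivable_pt_lim_scal; eauto]. intros; reflexivity. Qed.

Lemma dpl_lin2 (f g : R -> R) a b x lf lg : derivable_pt_lim f x lf -> derivable_pt_lim g x lg ->
  derivable_pt_lim (fun t => a * f t + b * g t) x (a * lf + b * lg).
Proof.
  intros Hf Hg. apply derivable_pt_lim_ext with (mult_real_fct a f + mult_real_fct b g)%F;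
    [intros; reflexivity|].
  apply derivable_pt_lim_plus; apply derivable_pt_lim_scal; auto.
Qed.

Lemma dpl_dilate (g : R -> R) (lam x l : R) : derivable_pt_lim g (lam * x) l ->
  derivable_pt_lim (fun y => g (lam * y)) x (lam * l).
Proof.
  intros H. assert (H1 : derivable_pt_lim (fun y => lam * y) x lam).
  { apply (dpl_val _ _ (lam * 1)); [apply dpl_scal, derivable_pt_lim_id|ring]. }
  rewrite Rmult_comm. exact (derivable_pt_lim_comp _ _ x _ _ H1 H).
Qed.

Lemma dpl_comp_inv g x l : 0 < x -> derivable_pt_lim g (/ x) l ->
  derivable_pt_lim (fun y => g (/ y)) x (l * (- (/ x) ^ 2)).
Proof.
  intros Hx H. apply (derivable_pt_lim_comp (fun y => / y) g x _ _); [|exact H].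
  pose proof (derivable_pt_lim_div (fct_cte 1) id x 0 1 (derivable_pt_lim_const 1 x)
                (derivable_pt_lim_id x)) as Hinv.
  eapply derivable_pt_lim_ext; [|eapply dpl_val; [apply Hinv; unfold id; lra|]].
  - intros y; unfold div_fct, fct_cte, id, Rdiv; ring.
  - unfold fct_cte, id, Rsqr. field. lra.
Qed.

Definition Cderiv (h h' : R -> Cplx) (x : R) : Prop :=
  derivable_pt_lim (fun t => Cre (h t)) x (Cre (h' x)) /\
  derivable_pt_lim (fun t => Cim (h t)) x (Cim (h' x)).

Lemma Cderiv_const c x : Cderiv (fun _ => c) (fun _ => Czero) x.
Proof. split; apply derivable_pt_lim_const. Qed.

Lemma Cderiv_add f f' g g' x : Cderiv f f' x -> Cderiv g g' x ->
  Cderiv (fun t => Cadd (f t) (g t)) (fun t => Cadd (f' t) (g' t)) x.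
Proof.
  intros [A B] [C E]. split.
  - apply derivable_pt_lim_ext with ((fun t => Cre (f t)) + (fun t => Cre (g t)))%F;
      [intros; reflexivity|apply derivable_pt_lim_plus; auto].
  - apply derivable_pt_lim_ext with ((fun t => Cim (f t)) + (fun t => Cim (g t)))%F;
      [intros; reflexivity|apply derivable_pt_lim_plus; auto].
Qed.

Lemma Cderiv_ext f f' g g' x : (forall y, f y = g y) -> f' x = g' x -> Cderiv f f' x -> Cderiv g g' x.
Proof.
  intros H1 H2 [A B]. rewrite H2 in A, B. split.
  - apply derivable_pt_lim_ext with (fun t => Cre (f t)); auto. intros y; rewrite H1; reflexivity.
  - apply derivable_pt_lim_ext with (fun t => Cim (f t)); auto. intros y; rewrite H1; reflexivity.
Qed.

Definition Ccont (h : R -> Cplx) (x : R) : Prop :=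
  continuity_pt (fun t => Cre (h t)) x /\ continuity_pt (fun t => Cim (h t)) x.

Lemma cont_ext f g x : (forall y, f y = g y) -> continuity_pt f x -> continuity_pt g x.
Proof. intros H. replace g with f by (extensionality y; auto). auto. Qed.

Lemma cont_plus f g x : continuity_pt f x -> continuity_pt g x -> continuity_pt (fun t => f t + g t) x.
Proof. intros. apply cont_ext with (f + g)%F; [intros; reflexivity|apply continuity_pt_plus; auto]. Qed.

Lemma cont_minus f g x : continuity_pt f x -> continuity_pt g x -> continuity_pt (fun t => f t - g t) x.
Proof. intros. apply cont_ext with (f - g)%F; [intros; reflexivity|apply continuity_pt_minus; auto]. Qed.

Lemma cont_mult f g x : continuity_pt f x -> continuity_pt g x -> continuity_pt (fun t => f t * g t) x.
Proof. intros. apply cont_ext with (f * g)%F; [intros; reflexivity|apply continuity_pt_mult; auto]. Qed.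

Lemma cont_const a x : continuity_pt (fun _ => a) x.
Proof. apply continuity_pt_const. intros u v; reflexivity. Qed.

Lemma Ccont_add h g x : Ccont h x -> Ccont g x -> Ccont (fun t => Cadd (h t) (g t)) x.
Proof. intros [A B] [C E]. split; simpl; apply cont_plus; auto. Qed.

Lemma Ccont_sub h g x : Ccont h x -> Ccont g x -> Ccont (fun t => Csub (h t) (g t)) x.
Proof.
  intros [A B] [C E]. split; eapply cont_ext;
    [| apply (cont_minus _ _ x A C) | | apply (cont_minus _ _ x B E)]; intros; simpl; ring.
Qed.

Lemma Ccont_cmul z h x : Ccont h x -> Ccont (fun t => Cmul z (h t)) x.
Proof.
  intros [A B]. split; simpl;
    [apply cont_minus|apply cont_plus]; apply cont_mult; auto; apply cont_const.
Qed.

Lemma Ccont_dilate h a x : Ccont h (a * x) -> Ccont (fun t => h (a * t)) x.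
Proof.
  assert (Hlin : continuity_pt (fun t => a * t) x).
  { apply derivable_continuous_pt. exists (a * 1). apply dpl_scal, derivable_pt_lim_id. }
  intros [A B]. split; [apply (continuity_pt_comp (fun t => a * t) (fun t => Cre (h t)) x Hlin)
                      |apply (continuity_pt_comp (fun t => a * t) (fun t => Cim (h t)) x Hlin)]; auto.
Qed.

Lemma Ccont_normsq h x : Ccont h x -> continuity_pt (fun t => Cnorm (h t) ^ 2) x.
Proof.
  intros [A B]. apply cont_ext with (fun t => Cre (h t) * Cre (h t) + Cim (h t) * Cim (h t)).
  - intros y; rewrite Cnorm_sq; ring.
  - apply cont_plus; apply cont_mult; auto.
Qed.

Lemma Ccont_deriv h h' x : Cderiv h h' x -> Ccont h x.
Proof. intros [A B]. split; apply derivable_continuous_pt; eexists; eauto. Qed.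

Lemma Ccont_pos_ext h h' x : 0 < x -> (forall y, 0 < y -> h y = h' y) -> Ccont h x -> Ccont h' x.
Proof.
  intros Hx H [A B].
  assert (Hnear : forall y, Rdist y x < x -> h y = h' y).
  { intros y Hy. unfold Rdist in Hy. apply Rabs_def2 in Hy. apply H; lra. }
  split; [apply (continuity_pt_locally_ext (fun t => Cre (h t)) _ x x)
         |apply (continuity_pt_locally_ext (fun t => Cim (h t)) _ x x)];
    auto; intros y Hy; rewrite Hnear; auto.
Qed.

Lemma Cderiv_uniform_limit (Fn Gn : nat -> R -> Cplx) (F G : R -> Cplx) c (r : posreal) :
  (forall e, 0 < e -> exists N, forall n y, (N <= n)%nat -> Boule c r y ->
     Cnorm (Csub (G y) (Gn n y)) < e) ->
  (forall y, Boule c r y -> forall e, 0 < e -> exists N, forall n, (N <= n)%nat ->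
     Cnorm (Csub (Fn n y) (F y)) < e) ->
  (forall n y, Boule c r y -> Cderiv (Fn n) (Gn n) y) ->
  forall y, Boule c r y -> Cderiv F G y.
Proof.
  intros Hunif Hpt Hder y Hy.
  assert (Hpart : forall p : Cplx -> R, (forall z, Rabs (p z) <= Cnorm z) ->
            (forall z w, p (Csub z w) = p z - p w) ->
            CVU (fun n t => p (Gn n t)) (fun t => p (G t)) c r /\
            (forall t, Boule c r t -> Un_cv (fun n => p (Fn n t)) (p (F t)))).
  { intros p Hp Hsub. split.
    - intros e He. destruct (Hunif e He) as [N HN]. exists N. intros n t Hn Ht.
      rewrite <- Hsub. eapply Rle_lt_trans; [apply Hp|auto].
    - intros t Ht e He. destruct (Hpt t Ht e He) as [N HN]. exists N. intros n Hn.
      unfold Rdist. rewrite <- Hsub. eapply Rle_lt_trans; [apply Hp|auto]. }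
  destruct (Hpart Cre Re_le (fun z w => eq_refl)) as [Ur Pr].
  destruct (Hpart Cim Im_le (fun z w => eq_refl)) as [Ui Pi].
  split.
  - apply (CVU_derivable (fun n t => Cre (Fn n t)) (fun n t => Cre (Gn n t)) _ _ c r Ur Pr); auto.
    intros n t Ht. apply Hder; auto.
  - apply (CVU_derivable (fun n t => Cim (Fn n t)) (fun n t => Cim (Gn n t)) _ _ c r Ui Pi); auto.
    intros n t Ht. apply Hder; auto.
Qed.

(** Dilation series *)

(* The k-th derivative of the n-th term of the dilation series sum_n d_n Psi_0 (lam_n x),
   where Psi_k is the k-th derivative of Psi_0. *)
Definition dil_term (d : nat -> Cplx) (lam : nat -> R) (Psi : nat -> R -> Cplx) (k n : nat)
  (x : R) : Cplx :=
  Cmul (d n) (Cscal (lam n ^ k) (Psi k (lam n * x))).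

Section DilationSeries.
Variables (d : nat -> Cplx) (lam : nat -> R) (Psi : nat -> R -> Cplx).
Hypothesis Hlam : forall n, (1 <= n)%nat -> 0 < lam n.
Hypothesis HPsi : forall k x, 0 < x -> Cderiv (Psi k) (Psi (S k)) x.

Lemma dil_term_deriv k n y : (1 <= n)%nat -> 0 < y ->
  Cderiv (dil_term d lam Psi k n) (dil_term d lam Psi (S k) n) y.
Proof.
  intros Hn Hy. pose proof (Hlam n Hn) as Hl.
  destruct (HPsi k (lam n * y) ltac:(nra)) as [Hr Hi].
  apply dpl_dilate in Hr. apply dpl_dilate in Hi. unfold dil_term. split.
  - pose proof (dpl_lin2 _ _ (Cre (d n) * lam n ^ k) (- Cim (d n) * lam n ^ k) y _ _ Hr Hi) as H.
    eapply derivable_pt_lim_ext; [|eapply dpl_val; [exact H|simpl; ring]]. intros t; simpl; ring.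
  - pose proof (dpl_lin2 _ _ (Cre (d n) * lam n ^ k) (Cim (d n) * lam n ^ k) y _ _ Hi Hr) as H.
    eapply derivable_pt_lim_ext; [|eapply dpl_val; [exact H|simpl; ring]]. intros t; simpl; ring.
Qed.

Lemma dil_psum_deriv k N y : 0 < y ->
  Cderiv (fun t => Csum_to (fun n => dil_term d lam Psi k n t) N)
         (fun t => Csum_to (fun n => dil_term d lam Psi (S k) n t) N) y.
Proof.
  intros Hy. induction N; [exact (Cderiv_const Czero y)|].
  apply (Cderiv_add _ _ _ _ y IHN). apply dil_term_deriv; auto; lia.
Qed.

Variable w : nat -> R.
Hypothesis Hw : nonneg_terms w.
Hypothesis Hb : bounded_sums w.
Hypothesis Hdom : forall k lo, 0 < lo -> exists C, 0 <= C /\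
   forall n x, (1 <= n)%nat -> lo <= x -> Cnorm (dil_term d lam Psi k n x) <= C * w n.

Lemma dil_series_cv k x : 0 < x -> exists l, Cseries_lim (fun n => dil_term d lam Psi k n x) l.
Proof.
  intros Hx. destruct (Hdom k x Hx) as [C [HC HD]].
  apply (series_comparison _ (fun n => C * w n)).
  - intros n Hn. apply HD; auto; lra.
  - intros n Hn. pose proof (Hw n Hn); nra.
  - destruct Hb as [W HW]. exists (C * W). intros N. rewrite Rsum_scal. pose proof (HW N). nra.
Qed.

Lemma dil_series_uniform k lo : 0 < lo -> forall e, 0 < e -> exists N, forall n y l,
  (N <= n)%nat -> lo <= y -> Cseries_lim (fun m => dil_term d lam Psi k m y) l ->
  Cnorm (Csub l (Csum_to (fun m => dil_term d lam Psi k m y) n)) < e.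
Proof.
  intros Hlo e He. destruct (Hdom k lo Hlo) as [C [HC HD]].
  destruct (bounded_sums_cv w Hw Hb) as [Wl HWl].
  assert (HCw : nonneg_terms (fun m => C * w m)) by (intros m Hm; pose proof (Hw m Hm); nra).
  assert (HCWl : Un_cv (Rsum_to (fun m => C * w m)) (C * Wl)).
  { apply (Un_cv_ext (fun n => C * Rsum_to w n)); [intros; rewrite Rsum_scal; reflexivity|].
    apply Un_cv_scal; auto. }
  destruct (HCWl e He) as [N HN]. exists N. intros n y l Hn Hy Hl.
  eapply Rle_lt_trans.
  - apply (series_tail _ (fun m => C * w m) l (C * Wl)); auto.
  - specialize (HN n Hn). unfold Rdist in HN. rewrite Rabs_minus_sym in HN.
    pose proof (Rsum_le_limit _ _ n HCw HCWl). rewrite Rabs_right in HN by lra. exact HN.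
Qed.

Lemma dil_series_smooth : exists V : nat -> R -> Cplx,
  (forall k x, 0 < x -> Cseries_lim (fun n => dil_term d lam Psi k n x) (V k x)) /\
  is_derivs (V O) V.
Proof.
  assert (Hex : forall k x, exists l, 0 < x -> Cseries_lim (fun n => dil_term d lam Psi k n x) l).
  { intros k x. destruct (Rlt_dec 0 x) as [Hx|Hx].
    - destruct (dil_series_cv k x Hx) as [l Hl]. exists l; auto.
    - exists Czero; intros; lra. }
  set (V := fun k x => proj1_sig (constructive_indefinite_description _ (Hex k x))).
  assert (HV : forall k x, 0 < x -> Cseries_lim (fun n => dil_term d lam Psi k n x) (V k x)).
  { intros k x Hx. unfold V. destruct (constructive_indefinite_description _ (Hex k x)) as [l Hl].
    apply Hl, Hx. }
  exists V. split; [exact HV|]. split; [intros; reflexivity|].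
  intros k x0 Hx0.
  set (r := mkposreal (x0 / 2) ltac:(lra)).
  assert (Hball : forall y, Boule x0 r y -> x0 / 2 <= y).
  { intros y Hy. unfold Boule in Hy; simpl in Hy. apply Rabs_def2 in Hy. lra. }
  apply (Cderiv_uniform_limit (fun n t => Csum_to (fun m => dil_term d lam Psi k m t) n)
           (fun n t => Csum_to (fun m => dil_term d lam Psi (S k) m t) n) _ _ x0 r).
  - intros e He. destruct (dil_series_uniform (S k) (x0 / 2) ltac:(lra) e He) as [N HN].
    exists N. intros n y Hn Hy. apply HN; auto. apply HV. pose proof (Hball y Hy); lra.
  - intros y Hy. apply HV. pose proof (Hball y Hy); lra.
  - intros n y Hy. apply dil_psum_deriv. pose proof (Hball y Hy); lra.
  - unfold Boule; simpl. rewrite Rminus_diag, Rabs_R0. lra.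
Qed.
End DilationSeries.

(** The derivatives of S f *)

(* A triple (c, j, i) stands for the function x |-> c x^(-j) D_i (1/x); all derivatives
   of S f (x) = x^(-1) f(1/x) are finite sums of such terms. *)
Definition inv_term := (R * nat * nat)%type.

Definition eval_term (D : nat -> R -> Cplx) (t : inv_term) (x : R) : Cplx :=
  let '(c, j, i) := t in Cscal (c * (/ x) ^ j) (D i (/ x)).

Fixpoint eval_terms (D : nat -> R -> Cplx) (L : list inv_term) (x : R) : Cplx :=
  match L with nil => Czero | t :: L' => Cadd (eval_term D t x) (eval_terms D L' x) end.

(* (c x^(-j) D_i(1/x))' = - c j x^(-j-1) D_i(1/x) - c x^(-j-2) D_(i+1)(1/x). *)
Definition deriv_term (t : inv_term) : list inv_term :=
  let '(c, j, i) := t in ((- c * INR j)%R, S j, i) :: ((- c)%R, S (S j), S i) :: nil.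

Fixpoint deriv_terms (L : list inv_term) : list inv_term :=
  match L with nil => nil | t :: L' => deriv_term t ++ deriv_terms L' end.

(* The k-th derivative of S f, given the derivatives D of f. *)
Definition Sderivs (D : nat -> R -> Cplx) (k : nat) : R -> Cplx :=
  eval_terms D (Nat.iter k deriv_terms ((1, 1%nat, 0%nat) :: nil)).

Lemma eval_terms_app D L1 L2 x :
  eval_terms D (L1 ++ L2) x = Cadd (eval_terms D L1 x) (eval_terms D L2 x).
Proof. induction L1; simpl; [|rewrite IHL1]; apply Cext; simpl; ring. Qed.

Section Sderivs.
Variable D : nat -> R -> Cplx.
Hypothesis HD : forall i y, 0 < y -> Cderiv (D i) (D (S i)) y.

Lemma eval_term_deriv t x : 0 < x -> Cderiv (eval_term D t) (eval_terms D (deriv_term t)) x.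
Proof.
  intros Hx. destruct t as [[c j] i].
  assert (Hix : 0 < / x) by (apply Rinv_0_lt_compat; auto).
  assert (Hp : derivable_pt_lim (fun y => (/ y) ^ j) x (INR j * (/ x) ^ Nat.pred j * (- (/ x) ^ 2))).
  { apply (dpl_comp_inv (fun z => z ^ j)); auto. apply derivable_pt_lim_pow. }
  destruct (HD i (/ x) Hix) as [Hr Hi].
  apply (dpl_comp_inv _ x _ Hx) in Hr. apply (dpl_comp_inv _ x _ Hx) in Hi.
  split.
  - pose proof (dpl_scal _ c x _ (dpl_mult _ _ x _ _ Hp Hr)) as H.
    eapply derivable_pt_lim_ext; [|eapply dpl_val; [exact H|]].
    + intros y; simpl; ring.
    + simpl. destruct j; simpl; ring.
  - pose proof (dpl_scal _ c x _ (dpl_mult _ _ x _ _ Hp Hi)) as H.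
    eapply derivable_pt_lim_ext; [|eapply dpl_val; [exact H|]].
    + intros y; simpl; ring.
    + simpl. destruct j; simpl; ring.
Qed.

Lemma eval_terms_deriv L x : 0 < x -> Cderiv (eval_terms D L) (eval_terms D (deriv_terms L)) x.
Proof.
  intros Hx. induction L as [|t L IH]; [exact (Cderiv_const Czero x)|].
  apply (Cderiv_ext (fun y => Cadd (eval_term D t y) (eval_terms D L y))
           (fun y => Cadd (eval_terms D (deriv_term t) y) (eval_terms D (deriv_terms L) y))).
  - intros y; reflexivity.
  - cbn [deriv_terms]. rewrite eval_terms_app; reflexivity.
  - apply Cderiv_add; auto. apply eval_term_deriv; auto.
Qed.
End Sderivs.

Definition S0_bounds (D : nat -> R -> Cplx) : Prop :=
  forall (k : nat) (n : Z), exists M, forall x, 0 < x -> powerRZ x n * Cnorm (D k x) <= M.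

Lemma powerRZ_inv_pow x n j : 0 < x -> powerRZ x n * (/ x) ^ j = powerRZ (/ x) (Z.of_nat j - n).
Proof.
  intros Hx. unfold Z.sub. rewrite powerRZ_add by (apply Rinv_neq_0_compat; lra).
  rewrite <- pow_powerRZ, powerRZ_neg', powerRZ_inv', Rinv_inv. ring.
Qed.

(* Since x |-> 1/x exchanges 0 and oo, each term x^(-j) D_i(1/x) keeps the S_0 decay. *)
Lemma eval_terms_bound D (HB : S0_bounds D) L n :
  exists M, forall x, 0 < x -> powerRZ x n * Cnorm (eval_terms D L x) <= M.
Proof.
  induction L as [|[[c j] i] L IH].
  - exists 0. intros x Hx. simpl. rewrite Cnorm_zero. lra.
  - destruct IH as [M1 HM1]. destruct (HB i (Z.of_nat j - n)%Z) as [M2 HM2].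
    exists (Rabs c * M2 + M1). intros x Hx. cbn [eval_terms].
    pose proof (powerRZ_lt x n Hx). specialize (HM1 x Hx).
    pose proof (Cnorm_tri (eval_term D (c, j, i) x) (eval_terms D L x)).
    assert (powerRZ x n * Cnorm (eval_term D (c, j, i) x) <= Rabs c * M2).
    { simpl. rewrite Cnorm_scal, Rabs_mult, (Rabs_right ((/ x) ^ j)).
      2: { apply Rle_ge, pow_le. left; apply Rinv_0_lt_compat; lra. }
      replace (powerRZ x n * (Rabs c * (/ x) ^ j * Cnorm (D i (/ x))))
        with (Rabs c * ((powerRZ x n * (/ x) ^ j) * Cnorm (D i (/ x)))) by ring.
      rewrite powerRZ_inv_pow by lra. apply Rmult_le_compat_l; [apply Rabs_pos|].
      apply HM2. apply Rinv_0_lt_compat; lra. }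
    apply Rle_trans with (powerRZ x n * (Cnorm (eval_term D (c, j, i) x) + Cnorm (eval_terms D L x)));
      [apply Rmult_le_compat_l|]; lra.
Qed.

Lemma Sderivs_S0 f D : in_S0 f D -> in_S0 (Sderivs D 0) (Sderivs D).
Proof.
  intros [[_ H1] HB]. split; [split|].
  - intros; reflexivity.
  - intros k x Hx. unfold Sderivs. simpl Nat.iter.
    apply (eval_terms_deriv D (fun i y Hy => H1 i y Hy)); auto.
  - intros k n. apply eval_terms_bound. exact HB.
Qed.

Lemma Sderivs_0 f D x : in_S0 f D -> 0 < x -> Sderivs D 0 x = opS f x.
Proof.
  intros [[H0 _] _] Hx. unfold Sderivs, opS. simpl.
  rewrite H0 by (apply Rinv_0_lt_compat; auto). apply Cext; simpl; ring.
Qed.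

(* The k-th derivative of B f = i (x f' + f/2) is i (x f^(k+1) + (k + 1/2) f^(k)). *)
Definition Bderivs (D : nat -> R -> Cplx) (k : nat) (x : R) : Cplx :=
  Cmul Ci (Cadd (Cscal x (D (S k) x)) (Cscal (INR k + / 2) (D k x))).

Lemma Bderivs_is_derivs f D : is_derivs f D -> is_derivs (opB f D) (Bderivs D).
Proof.
  intros [H0 H1]. split.
  - intros x Hx. unfold Bderivs, opB. rewrite H0 by auto. do 3 f_equal. simpl; ring.
  - intros k x Hx. destruct (H1 k x Hx) as [Ar Ai]. destruct (H1 (S k) x Hx) as [Br Bi].
    pose proof (dpl_mult id _ x _ _ (derivable_pt_lim_id x) Bi) as XBi.
    pose proof (dpl_mult id _ x _ _ (derivable_pt_lim_id x) Br) as XBr.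
    unfold Bderivs, id in *; split.
    + pose proof (dpl_lin2 _ _ (-1) (- (INR k + / 2)) x _ _ XBi Ai) as H.
      eapply derivable_pt_lim_ext; [|eapply dpl_val; [exact H|]].
      * intros y; simpl; ring.
      * rewrite S_INR; simpl; ring.
    + pose proof (dpl_lin2 _ _ 1 (INR k + / 2) x _ _ XBr Ar) as H.
      eapply derivable_pt_lim_ext; [|eapply dpl_val; [exact H|]].
      * intros y; simpl; ring.
      * rewrite S_INR; simpl; ring.
Qed.

Lemma Bderivs_bounds D : S0_bounds D -> S0_bounds (Bderivs D).
Proof.
  intros HB k n. destruct (HB (S k) (n + 1)%Z) as [M1 HM1]. destruct (HB k n) as [M2 HM2].
  exists (M1 + (INR k + / 2) * M2). intros x Hx. unfold Bderivs. rewrite Cnorm_Ci.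
  pose proof (Cnorm_tri (Cscal x (D (S k) x)) (Cscal (INR k + / 2) (D k x))) as Htri.
  pose proof (pos_INR k).
  rewrite !Cnorm_scal, Rabs_right, (Rabs_right (INR k + / 2)) in Htri by lra.
  specialize (HM1 x Hx). specialize (HM2 x Hx).
  rewrite powerRZ_add in HM1 by lra. simpl in HM1.
  pose proof (powerRZ_lt x n Hx).
  apply Rle_trans with (powerRZ x n * (x * Cnorm (D (S k) x) + (INR k + / 2) * Cnorm (D k x)));
    [apply Rmult_le_compat_l; lra|nra].
Qed.

Lemma Bderivs_S0 f D : in_S0 f D -> in_S0 (opB f D) (Bderivs D).
Proof. intros [H HB]. split; [apply Bderivs_is_derivs|apply Bderivs_bounds]; auto. Qed.

(* B S = - S B, written on derivative families: B (S f) = - S (B f). *)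
Lemma B_S_anticommute D z : 0 < z ->
  Cmul Ci (Cadd (Cscal z (Sderivs D 1 z)) (Cscal (/ 2) (Sderivs D 0 z)))
  = Copp (Sderivs (Bderivs D) 0 z).
Proof. intros Hz. unfold Sderivs, Bderivs. simpl. apply Cext; simpl; field; lra. Qed.

(** The L^2 bound for T(c) *)

(* int_lo^hi a m / (1 + m x)^2 dx <= a: the kernel m/(1+mx)^2 has total mass 1 on (0, oo). *)
Module RationalKernel.
Import Coquelicot.Coquelicot.

Lemma kernel_integral a m lo hi : 0 <= a -> 0 <= m -> 0 < lo -> lo <= hi ->
  forall pr : Riemann_integrable (fun x => a * (m / (1 + m * x) ^ 2)) lo hi, RiemannInt pr <= a.
Proof.
  intros Ha Hm Hlo Hlh pr. rewrite <- RInt_Reals.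
  assert (H : is_RInt (fun x => a * (m / (1 + m * x) ^ 2)) lo hi
               (minus ((fun x => - a / (1 + m * x)) hi) ((fun x => - a / (1 + m * x)) lo))).
  { apply (@is_RInt_derive R_CompleteNormedModule (fun x => - a / (1 + m * x))).
    - intros x Hx. rewrite Rmin_left, Rmax_right in Hx by lra. auto_derive; [nra|field; nra].
    - intros x Hx. rewrite Rmin_left, Rmax_right in Hx by lra.
      apply continuity_pt_filterlim. apply derivable_continuous_pt.
      eexists. apply is_derive_Reals. auto_derive; [nra|reflexivity]. }
  rewrite (is_RInt_unique _ _ _ _ H). unfold minus, plus, opp; simpl.
  assert (0 <= a / (1 + m * hi)) by (apply Rle_mult_inv_pos; nra).
  assert (a / (1 + m * lo) <= a).
  { unfold Rdiv. rewrite <- (Rmult_1_r a) at 2. apply Rmult_le_compat_l; auto.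
    rewrite <- Rinv_1. apply Rinv_le_contravar; nra. }
  unfold Rdiv in *. lra.
Qed.

Lemma kernel_continuous a m x : 0 <= m -> 0 < x ->
  continuity_pt (fun x => a * (m / (1 + m * x) ^ 2)) x.
Proof.
  intros Hm Hx. apply derivable_continuous_pt. eexists. apply is_derive_Reals.
  auto_derive; [nra|reflexivity].
Qed.
End RationalKernel.

Fixpoint Rblock (g : nat -> R) (N k : nat) : R :=
  match k with O => 0 | S k' => Rblock g N k' + g (S (N + k')) end.

Lemma Rblock_sum g N k : Rblock g N k = Rsum_to g (N + k) - Rsum_to g N.
Proof. induction k; [rewrite Nat.add_0_r; simpl; ring|]. rewrite Nat.add_succ_r. simpl. rewrite IHk. ring. Qed.

Lemma Rblock_scal C g N k : Rblock (fun m => C * g m) N k = C * Rblock g N k.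
Proof. induction k; simpl; [ring|rewrite IHk; ring]. Qed.

Lemma Rblock_le g h N k : (forall m, (1 <= m)%nat -> g m <= h m) -> Rblock g N k <= Rblock h N k.
Proof. intros H. induction k; simpl; [lra|]. pose proof (H (S (N + k)) ltac:(lia)). lra. Qed.

Lemma Rblock_nonneg g N k : (forall m, 0 <= g m) -> 0 <= Rblock g N k.
Proof. intros H. induction k; simpl; [lra|]. pose proof (H (S (N + k))). lra. Qed.

Lemma Cblock_norm u N k :
  Cnorm (Csub (Csum_to u N) (Csum_to u (N + k))) <= Rblock (fun m => Cnorm (u m)) N k.
Proof.
  induction k.
  - rewrite Nat.add_0_r. replace (Csub (Csum_to u N) (Csum_to u N)) with Czero
      by (apply Cext; simpl; ring). rewrite Cnorm_zero; simpl; lra.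
  - rewrite Nat.add_succ_r. simpl Rblock.
    replace (Csub (Csum_to u N) (Csum_to u (S (N + k))))
      with (Cadd (Csub (Csum_to u N) (Csum_to u (N + k))) (Copp (u (S (N + k)))))
      by (apply Cext; simpl; ring).
    eapply Rle_trans; [apply Cnorm_tri|]. rewrite Cnorm_opp. lra.
Qed.

(* The inductive step of the weighted Cauchy-Schwarz inequality. *)
Lemma cauchy_schwarz_step A W Q w z : 0 <= A -> 0 <= W -> 0 <= Q -> 0 <= w -> 0 <= z ->
  A ^ 2 <= W * Q -> (A + w * z) ^ 2 <= (W + w) * (Q + w * z ^ 2).
Proof.
  intros HA HW HQ Hw Hz H.
  assert (K : 0 <= W * z ^ 2 + Q - 2 * A * z).
  { destruct (Req_dec W 0) as [E|E].
    - subst. assert (A = 0) by nra. subst. nra.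
    - assert (0 <= W * (W * z ^ 2 + Q - 2 * A * z)).
      { replace (W * (W * z ^ 2 + Q - 2 * A * z)) with ((W * z - A) ^ 2 + (W * Q - A ^ 2)) by ring.
        pose proof (pow2_ge_0 (W * z - A)). lra. }
      apply Rmult_le_reg_l with W; lra. }
  replace ((W + w) * (Q + w * z ^ 2))
    with (W * Q + w * (W * z ^ 2 + Q - 2 * A * z) + 2 * A * w * z + w * w * z ^ 2) by ring.
  assert (0 <= w * (W * z ^ 2 + Q - 2 * A * z)) by nra. nra.
Qed.

Lemma weighted_cauchy_schwarz w z N k : (forall m, 0 <= w m) -> (forall m, 0 <= z m) ->
  Rblock (fun m => w m * z m) N k ^ 2 <= Rblock w N k * Rblock (fun m => w m * z m ^ 2) N k.
Proof.
  intros Hw Hz. induction k; simpl Rblock; [lra|].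
  apply cauchy_schwarz_step; auto.
  - apply Rblock_nonneg; intros; apply Rmult_le_pos; auto.
  - apply Rblock_nonneg; auto.
  - apply Rblock_nonneg; intros; apply Rmult_le_pos; auto. pose proof (Hz m); nra.
Qed.

Lemma kernel_block_continuous (al : nat -> R) N k x : 0 < x ->
  continuity_pt (fun x => Rblock (fun m => al m * (INR m / (1 + INR m * x) ^ 2)) N k) x.
Proof.
  intros Hx. induction k; cbn [Rblock]; [apply cont_const|]. apply cont_plus; auto.
  apply RationalKernel.kernel_continuous; [apply pos_INR|lra].
Qed.

Lemma kernel_block_integral (al : nat -> R) lo hi N k : (forall m, 0 <= al m) -> 0 < lo -> lo <= hi ->
  forall pr : Riemann_integrable (fun x => Rblock (fun m => al m * (INR m / (1 + INR m * x) ^ 2)) N k) lo hi,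
    RiemannInt pr <= Rblock al N k.
Proof.
  intros Hal Hlo Hlh. induction k; intros pr.
  - change (Rblock al N 0) with 0.
    rewrite (RiemannInt_P18 pr (RiemannInt_P14 lo hi 0) Hlh) by (intros; reflexivity).
    rewrite RiemannInt_P15. lra.
  - set (m := S (N + k)).
    assert (pr1 : Riemann_integrable (fun x => Rblock (fun m => al m * (INR m / (1 + INR m * x) ^ 2)) N k) lo hi).
    { apply continuity_implies_RiemannInt; auto. intros x Hx. apply kernel_block_continuous. lra. }
    assert (pr2 : Riemann_integrable (fun x => al m * (INR m / (1 + INR m * x) ^ 2)) lo hi).
    { apply continuity_implies_RiemannInt; auto. intros x Hx.
      apply RationalKernel.kernel_continuous; [apply pos_INR|lra]. }
    pose proof (RiemannInt_P10 1 pr1 pr2) as pr3.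
    rewrite (RiemannInt_P18 pr pr3 Hlh) by (intros; simpl; unfold m; ring).
    rewrite (RiemannInt_P12 pr1 pr2 pr3 Hlh).
    pose proof (RationalKernel.kernel_integral (al m) (INR m) lo hi (Hal m) (pos_INR m) Hlo Hlh pr2).
    pose proof (IHk pr1). change (Rblock al N (S k)) with (Rblock al N k + al m). lra.
Qed.

Lemma RiemannInt_le_shift f g lo hi delta (prf : Riemann_integrable f lo hi)
  (prg : Riemann_integrable g lo hi) : lo <= hi ->
  (forall x, lo < x < hi -> f x <= g x + delta) ->
  RiemannInt prf <= RiemannInt prg + delta * (hi - lo).
Proof.
  intros Hlh Hle.
  pose proof (RiemannInt_P10 1 prg (RiemannInt_P14 lo hi delta)) as prS.
  pose proof (RiemannInt_P19 prf prS Hlh) as Hint.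
  rewrite (RiemannInt_P12 prg (RiemannInt_P14 lo hi delta) prS Hlh), RiemannInt_P15 in Hint.
  apply Rle_trans with (RiemannInt prg + 1 * (delta * (hi - lo))); [|lra].
  apply Hint. intros x Hx. unfold fct_cte. rewrite Rmult_1_l. auto.
Qed.

Lemma Ccont_Tpart c h N x : (forall m, (1 <= m)%nat -> Ccont h (INR m * x)) -> Ccont (Tpart c h N) x.
Proof.
  intros H. unfold Tpart. induction N; [split; exact (cont_const 0 x)|].
  apply (Ccont_add _ (fun t => Cmul (c (S N)) (h (INR (S N) * t)))); auto.
  apply Ccont_cmul, (Ccont_dilate h), H. lia.
Qed.

(* The weights |c_m| / sqrt m whose summability makes T(c) bounded on L^2. *)
Definition cweight (c : nat -> Cplx) (m : nat) : R := Cnorm (c m) / sqrt (INR m).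

Lemma cweight_nonneg c m : 0 <= cweight c m.
Proof.
  unfold cweight. destruct m; [simpl; rewrite sqrt_0, Rdiv_0_r; lra|].
  apply Rle_mult_inv_pos; [apply Cnorm_nonneg|apply sqrt_lt_R0; rewrite S_INR; pose proof (pos_INR m); lra].
Qed.

(* sqrt m <= m for m >= 1, so |c_m| / m <= cweight c m. *)
Lemma sqrt_le_self x : 1 <= x -> sqrt x <= x.
Proof. intros H. rewrite <- (sqrt_pow2 x) at 2 by lra. apply sqrt_le_1_alt. nra. Qed.

Section TL2.
Variables (c : nat -> Cplx) (h U : R -> Cplx) (K Tl : R).
Hypothesis HK : 0 <= K.
Hypothesis HTl : Un_cv (Rsum_to (cweight c)) Tl.
Hypothesis Hcont : forall x, 0 < x -> Ccont h x.
Hypothesis HUc : forall x, 0 < x -> Ccont U x.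
Hypothesis Hbd : forall x, 0 < x -> Cnorm (h x) <= K / (1 + x).
Hypothesis HU : forall x, 0 < x -> Cseries_lim (fun m => Cmul (c m) (h (INR m * x))) (U x).

Let Hw : nonneg_terms (cweight c) := fun m _ => cweight_nonneg c m.

Lemma Tpart_cont N x : 0 < x -> Ccont (Tpart c h N) x.
Proof. intros Hx. apply Ccont_Tpart. intros m Hm. apply Hcont. apply Rmult_lt_0_compat; auto. apply lt_0_INR; lia. Qed.

(* Pointwise, by Cauchy-Schwarz with weights cweight c m:
   |sum_block c_m h(mx)|^2 <= (sum_block cweight) K^2 sum_block cweight_m m/(1+mx)^2. *)
Lemma Tpart_block_sq N k x : 0 < x ->
  Cnorm (Csub (Tpart c h N x) (Tpart c h (N + k) x)) ^ 2 <=
  Rblock (fun m => (Rblock (cweight c) N k * K ^ 2 * cweight c m) * (INR m / (1 + INR m * x) ^ 2)) N k.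
Proof.
  intros Hx.
  set (z := fun m => sqrt (INR m) * (K / (1 + INR m * x))).
  assert (Hz : forall m, 0 <= z m).
  { intros m. unfold z. apply Rmult_le_pos; [apply sqrt_pos|].
    apply Rle_mult_inv_pos; auto. pose proof (pos_INR m); nra. }
  assert (Hterm : Rblock (fun m => Cnorm (Cmul (c m) (h (INR m * x)))) N k
                  <= Rblock (fun m => cweight c m * z m) N k).
  { apply Rblock_le. intros m Hm. rewrite Cnorm_mul.
    assert (Hm' : 0 < INR m) by (apply lt_0_INR; lia).
    assert (Hs : 0 < sqrt (INR m)) by (apply sqrt_lt_R0; auto).
    replace (cweight c m * z m) with (Cnorm (c m) * (K / (1 + INR m * x)))
      by (unfold cweight, z; field; split; nra).
    apply Rmult_le_compat_l; [apply Cnorm_nonneg|]. apply Hbd. nra. }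
  pose proof (Cblock_norm (fun n => Cmul (c n) (h (INR n * x))) N k) as Hblock.
  pose proof (Cnorm_nonneg (Csub (Tpart c h N x) (Tpart c h (N + k) x))).
  unfold Tpart in *.
  apply Rle_trans with (Rblock (fun m => cweight c m * z m) N k ^ 2); [apply pow_incr; lra|].
  eapply Rle_trans; [apply (weighted_cauchy_schwarz _ z N k (cweight_nonneg c) Hz)|].
  rewrite <- Rblock_scal. right. f_equal. extensionality m.
  unfold z. rewrite Rpow_mult_distr, pow2_sqrt by apply pos_INR.
  assert (0 < 1 + INR m * x) by (pose proof (pos_INR m); nra). field. lra.
Qed.

(* Integrating in x: the L^2 norm of a block of T(c) h is at most K times the block of
   weights, hence at most K times the tail of sum cweight. *)
Lemma Tpart_block_L2 N k lo hi : 0 < lo -> lo <= hi ->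
  forall pr : Riemann_integrable (fun x => Cnorm (Csub (Tpart c h N x) (Tpart c h (N + k) x)) ^ 2) lo hi,
  RiemannInt pr <= K ^ 2 * (Tl - Rsum_to (cweight c) N) ^ 2.
Proof.
  intros Hlo Hlh pr. set (T := Rblock (cweight c) N k).
  assert (Hal : forall m, 0 <= T * K ^ 2 * cweight c m).
  { intros m. pose proof (Rblock_nonneg _ N k (cweight_nonneg c)).
    pose proof (cweight_nonneg c m). pose proof (pow2_ge_0 K).
    apply Rmult_le_pos; [apply Rmult_le_pos|]; auto. }
  assert (prG : Riemann_integrable
     (fun x => Rblock (fun m => T * K ^ 2 * cweight c m * (INR m / (1 + INR m * x) ^ 2)) N k) lo hi).
  { apply continuity_implies_RiemannInt; auto. intros x Hx. apply kernel_block_continuous. lra. }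
  pose proof (kernel_block_integral _ lo hi N k Hal Hlo Hlh prG) as HG.
  rewrite Rblock_scal in HG. fold T in HG.
  assert (HFG : RiemannInt pr <= RiemannInt prG).
  { apply RiemannInt_P19; auto. intros x Hx. apply Tpart_block_sq. lra. }
  assert (HT : 0 <= T <= Tl - Rsum_to (cweight c) N).
  { unfold T. rewrite Rblock_sum. pose proof (Rsum_mono (cweight c) N (N + k) Hw ltac:(lia)).
    pose proof (Rsum_le_limit (cweight c) Tl (N + k) Hw HTl). lra. }
  assert (T * K ^ 2 * T <= K ^ 2 * (Tl - Rsum_to (cweight c) N) ^ 2).
  { pose proof (pow2_ge_0 K).
    replace (T * K ^ 2 * T) with (K ^ 2 * (T * T)) by ring. apply Rmult_le_compat_l; nra. }
  lra.
Qed.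

Lemma Tterm_bound lo m x : 0 < lo -> lo <= x -> (1 <= m)%nat ->
  Cnorm (Cmul (c m) (h (INR m * x))) <= K / lo * cweight c m.
Proof.
  intros Hlo Hx Hm. rewrite Cnorm_mul.
  assert (Hm' : 1 <= INR m) by (apply (le_INR 1); lia).
  assert (Hs : 0 < sqrt (INR m)) by (apply sqrt_lt_R0; lra).
  pose proof (sqrt_le_self _ Hm').
  eapply Rle_trans; [apply Rmult_le_compat_l; [apply Cnorm_nonneg|apply Hbd; nra]|].
  unfold cweight. pose proof (Cnorm_nonneg (c m)).
  replace (Cnorm (c m) * (K / (1 + INR m * x))) with ((Cnorm (c m) * K) * / (1 + INR m * x)) by (field; nra).
  replace (K / lo * (Cnorm (c m) / sqrt (INR m))) with ((Cnorm (c m) * K) * / (lo * sqrt (INR m))) by (field; lra).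
  apply Rmult_le_compat_l; [nra|]. apply Rinv_le_contravar; nra.
Qed.

Lemma Tpart_sup_bounds lo P x : 0 < lo -> lo <= x ->
  Cnorm (Tpart c h P x) <= K / lo * Tl /\ Cnorm (U x) <= K / lo * Tl /\
  Cnorm (Csub (U x) (Tpart c h P x)) <= K / lo * (Tl - Rsum_to (cweight c) P).
Proof.
  intros Hlo Hx.
  set (w2 := fun m => K / lo * cweight c m).
  assert (Hkl : 0 <= K / lo) by (apply Rle_mult_inv_pos; lra).
  assert (Hw2 : nonneg_terms w2) by (intros m Hm; apply Rmult_le_pos; auto; apply cweight_nonneg).
  assert (HTl2 : Un_cv (Rsum_to w2) (K / lo * Tl)).
  { apply (Un_cv_ext (fun n => K / lo * Rsum_to (cweight c) n)); [intros; unfold w2; rewrite Rsum_scal; reflexivity|].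
    apply Un_cv_scal; auto. }
  assert (Hdom : forall m, (1 <= m)%nat -> Cnorm (Cmul (c m) (h (INR m * x))) <= w2 m).
  { intros m Hm. apply Tterm_bound; auto. }
  split; [|split].
  - eapply Rle_trans; [apply Csum_to_norm|].
    eapply Rle_trans; [apply Rsum_le; exact Hdom|]. apply Rsum_le_limit; auto.
  - apply (series_norm_bound _ w2 _ _ (HU x ltac:(lra)) Hdom).
    intros n. apply Rsum_le_limit; auto.
  - pose proof (series_tail _ w2 (U x) _ Hdom Hw2 (HU x ltac:(lra)) HTl2 P) as Htail.
    replace (K / lo * (Tl - Rsum_to (cweight c) P)) with (K / lo * Tl - Rsum_to w2 P)
      by (unfold w2; rewrite Rsum_scal; ring).
    exact Htail.
Qed.

(* Uniformly on [lo, oo), the partial sums T_P approximate U in the sense needed to pass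
   to the limit under the integral sign: |T_N - U|^2 <= |T_N - T_P|^2 + delta. *)
Lemma Tpart_approx N lo delta : 0 < lo -> 0 < delta -> exists P, (N <= P)%nat /\
  forall x, lo <= x -> Cnorm (Csub (Tpart c h N x) (U x)) ^ 2
                        <= Cnorm (Csub (Tpart c h N x) (Tpart c h P x)) ^ 2 + delta.
Proof.
  intros Hlo Hdelta.
  set (R0 := K / lo * Tl). set (C := K / lo * (4 * R0) + 1).
  assert (Hkl : 0 <= K / lo) by (apply Rle_mult_inv_pos; lra).
  assert (HR0 : 0 <= R0) by (pose proof (Rsum_le_limit _ Tl 0 Hw HTl); simpl in *; unfold R0; nra).
  destruct (HTl (delta / C)) as [P0 HP0]; [apply Rdiv_lt_0_compat; unfold C; nra|].
  exists (max N P0). split; [lia|]. intros x Hx.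
  set (P := max N P0). specialize (HP0 P ltac:(unfold P; lia)). unfold Rdist in HP0.
  pose proof (Rsum_le_limit _ Tl P Hw HTl).
  rewrite Rabs_minus_sym, Rabs_right in HP0 by lra.
  set (E := K / lo * (Tl - Rsum_to (cweight c) P)).
  assert (HE : 0 <= E /\ E * (4 * R0) <= delta).
  { unfold E. split; [apply Rmult_le_pos; lra|].
    apply Rle_trans with ((Tl - Rsum_to (cweight c) P) * C); [unfold C; nra|].
    apply Rmult_le_reg_r with (/ C); [apply Rinv_0_lt_compat; unfold C; nra|].
    rewrite Rmult_assoc, Rinv_r by (unfold C; nra). unfold Rdiv in HP0. lra. }
  destruct (Tpart_sup_bounds lo N x Hlo Hx) as [HTN [HUb _]].
  destruct (Tpart_sup_bounds lo P x Hlo Hx) as [HTP [_ Htail]].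
  set (a := Cnorm (Csub (Tpart c h N x) (U x))).
  set (b := Cnorm (Csub (Tpart c h N x) (Tpart c h P x))).
  assert (Hab : a <= b + E).
  { unfold a, b. eapply Rle_trans; [apply (Csub_tri3 _ (Tpart c h P x))|].
    rewrite (Cnorm_sub_sym (Tpart c h P x)). unfold E; lra. }
  assert (Ha : 0 <= a <= 2 * R0).
  { split; [apply Cnorm_nonneg|]. unfold a. eapply Rle_trans; [apply Cnorm_sub_tri|]. unfold R0; lra. }
  assert (Hb : 0 <= b <= 2 * R0).
  { split; [apply Cnorm_nonneg|]. unfold b. eapply Rle_trans; [apply Cnorm_sub_tri|]. unfold R0; lra. }
  destruct HE as [HE1 HE2]. destruct (Rle_dec a b); [nra|].
  assert (a ^ 2 - b ^ 2 = (a - b) * (a + b)) by ring. nra.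
Qed.

Lemma Tpart_error_L2 N lo hi : 0 < lo -> lo <= hi ->
  exists pr : Riemann_integrable (fun x => Cnorm (Csub (Tpart c h N x) (U x)) ^ 2) lo hi,
    RiemannInt pr <= K ^ 2 * (Tl - Rsum_to (cweight c) N) ^ 2.
Proof.
  intros Hlo Hlh.
  assert (Hint : forall (g : R -> Cplx), (forall x, 0 < x -> Ccont g x) ->
            Riemann_integrable (fun x => Cnorm (Csub (Tpart c h N x) (g x)) ^ 2) lo hi).
  { intros g Hg. apply continuity_implies_RiemannInt; auto. intros x Hx.
    apply Ccont_normsq, Ccont_sub; [apply Tpart_cont|apply Hg]; lra. }
  exists (Hint U HUc).
  apply Rle_plus_epsilon. intros eps Heps.
  set (delta := eps / (hi - lo + 1)).
  destruct (Tpart_approx N lo delta Hlo) as [P [HNP Happrox]]; [apply Rdiv_lt_0_compat; lra|].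
  replace P with (N + (P - N))%nat in Happrox by lia.
  pose proof (Hint (Tpart c h (N + (P - N))) (Tpart_cont (N + (P - N)))) as prP.
  eapply Rle_trans; [apply (RiemannInt_le_shift _ _ _ _ delta _ prP Hlh)|].
  - intros x Hx. apply Happrox. lra.
  - pose proof (Tpart_block_L2 N (P - N) lo hi Hlo Hlh prP).
    assert (delta * (hi - lo) <= eps).
    { apply Rle_trans with (delta * (hi - lo + 1)); [apply Rmult_le_compat_l; try lra|].
      - unfold delta. apply Rle_mult_inv_pos; lra.
      - unfold delta; right; field; lra. }
    lra.
Qed.

Lemma Tpart_L2 : L2conv (Tpart c h) U /\ inL2 U.
Proof.
  split.
  - intros e He. set (dl := Rmin 1 (e / (K ^ 2 + 1))).
    assert (HK2 : 0 <= K ^ 2) by apply pow2_ge_0.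
    assert (Hdl : 0 < dl) by (apply Rmin_pos; [lra|apply Rdiv_lt_0_compat; lra]).
    destruct (HTl dl Hdl) as [N0 HN0]. exists N0. intros N HN lo hi Hlo Hlh.
    destruct (Tpart_error_L2 N lo hi Hlo Hlh) as [pr Hpr]. exists pr.
    eapply Rle_trans; [exact Hpr|].
    specialize (HN0 N HN). unfold Rdist in HN0.
    pose proof (Rsum_le_limit (cweight c) Tl N Hw HTl).
    rewrite Rabs_minus_sym, Rabs_right in HN0 by lra.
    assert (dl <= 1) by apply Rmin_l. assert (dl <= e / (K ^ 2 + 1)) by apply Rmin_r.
    assert ((Tl - Rsum_to (cweight c) N) ^ 2 <= dl) by nra.
    assert (K ^ 2 * dl <= e).
    { apply Rle_trans with ((K ^ 2 + 1) * (e / (K ^ 2 + 1))); [nra|right; field; lra]. }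
    nra.
  - exists (K ^ 2 * (Tl - 0) ^ 2). intros lo hi Hlo Hlh.
    destruct (Tpart_error_L2 0 lo hi Hlo Hlh) as [pr Hpr].
    replace (fun x => Cnorm (U x) ^ 2) with (fun x => Cnorm (Csub (Tpart c h 0 x) (U x)) ^ 2).
    + exists pr. exact Hpr.
    + extensionality x. unfold Tpart; simpl Csum_to. rewrite Cnorm_sub_sym. do 2 f_equal.
      apply Cext; simpl; ring.
Qed.
End TL2.

Lemma Cnorm_dil_term d lam Psi k n x : 0 <= lam n ->
  Cnorm (dil_term d lam Psi k n x) = Cnorm (d n) * lam n ^ k * Cnorm (Psi k (lam n * x)).
Proof.
  intros Hl. unfold dil_term. rewrite Cnorm_mul, Cnorm_scal, Rabs_right by (apply Rle_ge, pow_le; auto).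
  ring.
Qed.

Lemma decay_bound_nonneg (h : R -> Cplx) j M : (forall t, 0 < t -> t ^ j * Cnorm (h t) <= M) -> 0 <= M.
Proof. intros H. specialize (H 1 Rlt_0_1). rewrite pow1 in H. pose proof (Cnorm_nonneg (h 1)). lra. Qed.

(* The decay x^(k+1) |h^(k)(x)| <= M_k for all k; it holds on S_0 and for T-images of S_0. *)
Definition decaying (Psi : nat -> R -> Cplx) : Prop :=
  forall k, exists M, forall t, 0 < t -> t ^ S k * Cnorm (Psi k t) <= M.

Lemma S0_decaying f D : in_S0 f D -> decaying D.
Proof.
  intros [_ HB] k. destruct (HB k (Z.of_nat (S k))) as [M HM]. exists M. intros t Ht.
  rewrite pow_powerRZ. auto.
Qed.

Section DecayingDilation.
Variables (d : nat -> Cplx) (lam : nat -> R) (Psi : nat -> R -> Cplx).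
Hypothesis Hlam : forall n, (1 <= n)%nat -> 0 < lam n.
Hypothesis Hder : forall k x, 0 < x -> Cderiv (Psi k) (Psi (S k)) x.
Hypothesis Hdecay : decaying Psi.
Hypothesis Hw : bounded_sums (fun n => Cnorm (d n) / lam n).

(* x^(k+1) |d_n lam_n^k Psi_k(lam_n x)| = (|d_n| / lam_n) (lam_n x)^(k+1) |Psi_k(lam_n x)|. *)
Lemma dil_term_decay k M n x : (forall t, 0 < t -> t ^ S k * Cnorm (Psi k t) <= M) ->
  (1 <= n)%nat -> 0 < x -> x ^ S k * Cnorm (dil_term d lam Psi k n x) <= Cnorm (d n) / lam n * M.
Proof.
  intros HM Hn Hx. pose proof (Hlam n Hn) as Hl.
  rewrite Cnorm_dil_term by lra.
  replace (x ^ S k * (Cnorm (d n) * lam n ^ k * Cnorm (Psi k (lam n * x))))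
    with (Cnorm (d n) / lam n * ((lam n * x) ^ S k * Cnorm (Psi k (lam n * x))))
    by (rewrite Rpow_mult_distr; simpl; field; lra).
  apply Rmult_le_compat_l; [apply Rle_mult_inv_pos; [apply Cnorm_nonneg|lra]|].
  apply HM. nra.
Qed.

Lemma dil_weights_nonneg : nonneg_terms (fun n => Cnorm (d n) / lam n).
Proof. intros n Hn. apply Rle_mult_inv_pos; [apply Cnorm_nonneg|auto]. Qed.

Lemma dil_series_decaying : exists V : nat -> R -> Cplx,
  (forall k x, 0 < x -> Cseries_lim (fun n => dil_term d lam Psi k n x) (V k x)) /\
  is_derivs (V O) V /\ decaying V.
Proof.
  destruct (dil_series_smooth d lam Psi Hlam Hder _ dil_weights_nonneg Hw) as [V [HV HVd]].
  - intros k lo Hlo. destruct (Hdecay k) as [M HM]. pose proof (decay_bound_nonneg _ _ _ HM).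
    exists (M / lo ^ S k). split; [apply Rle_mult_inv_pos; auto; apply pow_lt; auto|].
    intros n x Hn Hx. pose proof (dil_term_decay k M n x HM Hn ltac:(lra)).
    pose proof (dil_weights_nonneg n Hn). pose proof (pow_lt lo (S k) Hlo).
    pose proof (pow_incr lo x (S k) ltac:(lra)).
    apply Rmult_le_reg_l with (lo ^ S k); auto.
    apply Rle_trans with (x ^ S k * Cnorm (dil_term d lam Psi k n x));
      [apply Rmult_le_compat_r; [apply Cnorm_nonneg|auto]|].
    replace (lo ^ S k * (M / lo ^ S k * (Cnorm (d n) / lam n))) with (Cnorm (d n) / lam n * M)
      by (field; split; [apply Rgt_not_eq, Hlam; auto|apply pow_nonzero; lra]).
    auto.
  - exists V. split; [|split]; auto.
    intros k. destruct (Hdecay k) as [M HM]. destruct Hw as [W HW].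
    pose proof (decay_bound_nonneg _ _ _ HM).
    exists (M * W). intros t Ht. pose proof (pow_lt t (S k) Ht).
    assert (Cnorm (V k t) <= M / t ^ S k * W).
    { apply (series_norm_bound _ (fun n => M / t ^ S k * (Cnorm (d n) / lam n)) _ _ (HV k t Ht)).
      - intros n Hn. apply Rmult_le_reg_l with (t ^ S k); auto.
        replace (t ^ S k * (M / t ^ S k * (Cnorm (d n) / lam n))) with (Cnorm (d n) / lam n * M)
          by (field; split; [apply Rgt_not_eq, Hlam; auto|lra]).
        apply dil_term_decay; auto.
      - intros N. rewrite Rsum_scal. apply Rmult_le_compat_l; [apply Rle_mult_inv_pos; auto|auto]. }
    apply Rle_trans with (t ^ S k * (M / t ^ S k * W)); [apply Rmult_le_compat_l; lra|].
    right; field; lra.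
Qed.
End DecayingDilation.

(* B commutes with dilations: if B Psi = - Psi2 then B (sum_n d_n Psi(lam_n x))
   = - sum_n d_n Psi2(lam_n x). *)
Lemma B_dilation_series d lam Psi Psi2 V0 V1 W x : 0 < x -> (forall n, (1 <= n)%nat -> 0 < lam n) ->
  Cseries_lim (fun n => dil_term d lam Psi 0 n x) V0 -> Cseries_lim (fun n => dil_term d lam Psi 1 n x) V1 ->
  Cseries_lim (fun n => dil_term d lam Psi2 0 n x) W ->
  (forall z, 0 < z -> Cmul Ci (Cadd (Cscal z (Psi 1%nat z)) (Cscal (/ 2) (Psi 0%nat z))) = Copp (Psi2 0%nat z)) ->
  Cmul Ci (Cadd (Cscal x V1) (Cscal (/ 2) V0)) = Copp W.
Proof.
  intros Hx Hlam H0 H1 H2 HP.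
  pose proof (series_cmul Ci _ _ (series_add _ _ _ _ (series_scal x _ _ H1) (series_scal (/ 2) _ _ H0))) as HL.
  replace (Copp W) with (Cscal (-1) W) by (apply Cext; simpl; ring).
  eapply series_unique; [exact HL|]. eapply series_ext; [|exact (series_scal (-1) _ _ H2)].
  intros n Hn. specialize (HP (lam n * x) ltac:(pose proof (Hlam n Hn); nra)).
  transitivity (Cmul (d n) (Copp (Psi2 0%nat (lam n * x)))); [|rewrite <- HP];
    unfold dil_term; apply Cext; simpl; ring.
Qed.

(** L^2 bookkeeping: values at x <= 0 are irrelevant *)

Lemma L2norm2_le_transfer h h' M : (forall x, 0 < x -> Cnorm (h' x) = Cnorm (h x)) ->
  L2norm2_le h M -> L2norm2_le h' M.
Proof.
  intros He H lo hi Hlo Hlh. destruct (H lo hi Hlo Hlh) as [pr Hpr].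
  assert (Heq : forall x, Rmin lo hi <= x <= Rmax lo hi -> Cnorm (h x) ^ 2 = Cnorm (h' x) ^ 2).
  { intros x Hx. rewrite Rmin_left in Hx by lra. rewrite He by lra. reflexivity. }
  exists (Riemann_integrable_ext _ Heq pr).
  rewrite (RiemannInt_P18 _ pr Hlh); auto. intros x Hx. rewrite He by lra. reflexivity.
Qed.

Lemma inL2_transfer h h' : (forall x, 0 < x -> Cnorm (h' x) = Cnorm (h x)) -> inL2 h -> inL2 h'.
Proof. intros He [M HM]. exists M. eapply L2norm2_le_transfer; eauto. Qed.

Lemma L2conv_transfer hN v v' : (forall x, 0 < x -> v x = v' x) -> L2conv hN v -> L2conv hN v'.
Proof.
  intros He H e He'. destruct (H e He') as [N0 HN0]. exists N0. intros N HN.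
  apply (L2norm2_le_transfer (fun x => Csub (hN N x) (v x))); [|apply HN0; auto].
  intros x Hx. rewrite He by auto. reflexivity.
Qed.

(* F(a_n) f = v with T(c) in place of T(conj b): T(a) f = g pointwise and the partial
   sums of T(c) S g converge to v in L^2. *)
Definition F_image_with (a c : nat -> Cplx) (f v : R -> Cplx) : Prop :=
  exists g, T_pointwise a f g /\ L2conv (Tpart c (opS g)) v.

(* S T(a) f (y) = sum_n (a_n / n) (S f)(y / n). *)
Definition ascaled (a : nat -> Cplx) (n : nat) : Cplx := Cscal (/ INR n) (a n).
Definition inv_nat (n : nat) : R := / INR n.

Lemma INR_pos n : (1 <= n)%nat -> 0 < INR n.
Proof. intros. apply lt_0_INR; lia. Qed.

Lemma inv_nat_pos n : (1 <= n)%nat -> 0 < inv_nat n.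
Proof. intros. apply Rinv_0_lt_compat, INR_pos; auto. Qed.

Section Construction.
Variables (a c : nat -> Cplx).
Hypothesis Ha : bounded_sums (fun n => Cnorm (a n)).
Hypothesis Hc : bounded_sums (cweight c).

Lemma ST_family f D : in_S0 f D -> exists H : nat -> R -> Cplx,
  (forall k t, 0 < t -> Cseries_lim (fun n => dil_term (ascaled a) inv_nat (Sderivs D) k n t) (H k t)) /\
  is_derivs (H O) H /\ decaying H /\ exists A, forall t, 0 < t -> Cnorm (H O t) <= A.
Proof.
  intros hf. pose proof (Sderivs_S0 f D hf) as hS. destruct hS as [[_ hSd] hSb].
  assert (Hweights : forall n, (1 <= n)%nat -> Cnorm (ascaled a n) / inv_nat n = Cnorm (a n)).
  { intros n Hn. pose proof (INR_pos n Hn). unfold ascaled, inv_nat.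
    rewrite Cnorm_scal, Rabs_right by (left; apply Rinv_0_lt_compat; lra). field; lra. }
  destruct (dil_series_decaying (ascaled a) inv_nat (Sderivs D) inv_nat_pos hSd
              (S0_decaying _ _ (Sderivs_S0 f D hf))) as [H [HH [HHd HHdec]]].
  { destruct Ha as [W HW]. exists W. intros N. rewrite <- (HW N). right.
    induction N; cbn [Rsum_to]; [reflexivity|]. rewrite IHN, Hweights by lia. reflexivity. }
  exists H. split; [|split; [|split]]; auto.
  destruct (hSb O 0%Z) as [M HM]. destruct Ha as [W HW].
  exists (M * W). intros t Ht.
  apply (series_norm_bound _ (fun n => M * Cnorm (a n)) _ _ (HH O t Ht)).
  - intros n Hn. pose proof (inv_nat_pos n Hn). pose proof (INR_pos n Hn).
    rewrite Cnorm_dil_term by lra. specialize (HM (inv_nat n * t) ltac:(nra)). simpl in HM.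
    rewrite Rmult_1_l in HM. unfold ascaled, inv_nat in *.
    rewrite Cnorm_scal, Rabs_right by lra. simpl.
    assert (/ INR n <= 1) by (rewrite <- Rinv_1; apply Rinv_le_contravar; [lra|apply (le_INR 1); lia]).
    pose proof (Cnorm_nonneg (a n)). pose proof (Cnorm_nonneg (Sderivs D 0 (/ INR n * t))).
    pose proof (Rmult_le_pos _ _ (Cnorm_nonneg (a n)) (Cnorm_nonneg (Sderivs D 0 (/ INR n * t)))).
    rewrite Rmult_1_r. apply Rle_trans with (Cnorm (a n) * Cnorm (Sderivs D 0 (/ INR n * t))); [nra|].
    rewrite (Rmult_comm M). apply Rmult_le_compat_l; auto.
  - intros N. rewrite Rsum_scal. apply Rmult_le_compat_l; auto.
    pose proof (HM 1 Rlt_0_1). pose proof (Cnorm_nonneg (Sderivs D 0 1)). simpl in *. lra.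
Qed.

Lemma T_pointwise_from_ST f D (H0 : R -> Cplx) : in_S0 f D ->
  (forall t, 0 < t -> Cseries_lim (fun n => dil_term (ascaled a) inv_nat (Sderivs D) 0 n t) (H0 t)) ->
  T_pointwise a f (fun y => Cscal (/ y) (H0 (/ y))).
Proof.
  intros hf HH y Hy. pose proof (series_scal (/ y) _ _ (HH (/ y) (Rinv_0_lt_compat _ Hy))) as H.
  eapply series_ext; [|exact H]. intros n Hn. pose proof (INR_pos n Hn).
  unfold dil_term, ascaled, inv_nat. simpl pow.
  rewrite (Sderivs_0 f D) by (auto; apply Rmult_lt_0_compat; apply Rinv_0_lt_compat; lra).
  unfold opS. rewrite Rinv_mult, !Rinv_inv. apply Cext; simpl; field; lra.
Qed.

Lemma F_family f D (H : nat -> R -> Cplx) : in_S0 f D ->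
  (forall k t, 0 < t -> Cseries_lim (fun n => dil_term (ascaled a) inv_nat (Sderivs D) k n t) (H k t)) ->
  is_derivs (H O) H -> decaying H -> (exists A, forall t, 0 < t -> Cnorm (H O t) <= A) ->
  exists Du : nat -> R -> Cplx,
    (forall k x, 0 < x -> Cseries_lim (fun m => dil_term c INR H k m x) (Du k x)) /\
    is_derivs (Du O) Du /\ F_image_with a c f (Du O) /\ inL2 (Du O).
Proof.
  intros hf HH [_ HHd] HHdec [A0 HA0].
  destruct (dil_series_decaying c INR H INR_pos HHd HHdec) as [Du [Dus [Dud _]]].
  { destruct Hc as [W HW]. exists W. intros N. eapply Rle_trans; [|apply (HW N)].
    apply Rsum_le. intros m Hm. pose proof (INR_pos m Hm).
    assert (1 <= INR m) by (apply (le_INR 1); lia).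
    pose proof (sqrt_le_self _ H1). assert (0 < sqrt (INR m)) by (apply sqrt_lt_R0; lra).
    unfold cweight, Rdiv. apply Rmult_le_compat_l; [apply Cnorm_nonneg|apply Rinv_le_contravar; lra]. }
  set (g := fun y => Cscal (/ y) (H O (/ y))).
  assert (HgS : forall x, 0 < x -> opS g x = H O x).
  { intros x Hx. unfold opS, g. rewrite Rinv_inv. apply Cext; simpl; field; lra. }
  destruct (HHdec O) as [A1 HA1]. destruct (bounded_sums_cv _ (fun m _ => cweight_nonneg c m) Hc) as [Tl HTl].
  assert (HL2 : L2conv (Tpart c (opS g)) (Du O) /\ inL2 (Du O)).
  { apply (Tpart_L2 c (opS g) (Du O) (A0 + A1) Tl).
    - pose proof (HA0 1 Rlt_0_1). pose proof (HA1 1 Rlt_0_1). pose proof (Cnorm_nonneg (H O 1)).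
      rewrite pow1 in *. lra.
    - exact HTl.
    - intros x Hx. apply (Ccont_pos_ext (H O)); auto; [intros y Hy; rewrite HgS; auto|].
      apply (Ccont_deriv _ (H 1%nat)). apply HHd; auto.
    - intros x Hx. apply (Ccont_deriv _ (Du 1%nat)). apply Dud; auto.
    - intros x Hx. rewrite HgS by auto. specialize (HA0 x Hx). specialize (HA1 x Hx).
      simpl in HA1. rewrite Rmult_1_r in HA1.
      apply Rmult_le_reg_r with (1 + x); [lra|]. unfold Rdiv. rewrite Rmult_assoc, Rinv_l by lra. lra.
    - intros x Hx. eapply series_ext; [|apply (Dus O x Hx)]. intros m Hm.
      unfold dil_term. simpl pow. rewrite HgS by (apply Rmult_lt_0_compat; auto; apply INR_pos; auto).
      apply Cext; simpl; ring. }
  exists Du. split; [|split; [|split]]; auto; [|apply HL2].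
  exists g. split; [apply (T_pointwise_from_ST f D); auto|apply HL2].
Qed.

Lemma F_B_anticommute f D : in_S0 f D ->
  exists (u : R -> Cplx) (Du : nat -> R -> Cplx),
    F_image_with a c f u /\ is_derivs u Du /\ inL2 u /\
    inL2 (fun x => Cadd (Cscal x (Du 1%nat x)) (Cscal (/ 2) (u x))) /\
    F_image_with a c (opB f D) (fun x => Copp (opB u Du x)).
Proof.
  intros hf. pose proof (Bderivs_S0 f D hf) as hBf.
  destruct (ST_family f D hf) as [H [HHs [HHd [HHdec HHb]]]].
  destruct (F_family f D H hf HHs HHd HHdec HHb) as [Du [Dus [Dud [HF HL2]]]].
  destruct (ST_family _ _ hBf) as [H2 [H2s [H2d [H2dec H2b]]]].
  destruct (F_family _ _ H2 hBf H2s H2d H2dec H2b) as [Du2 [Du2s [_ [HF2 HL2B]]]].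
  (* B (S T(a) f) = - S T(a) (B f) *)
  assert (HBH : forall z, 0 < z ->
            Cmul Ci (Cadd (Cscal z (H 1%nat z)) (Cscal (/ 2) (H O z))) = Copp (H2 O z)).
  { intros z Hz. apply (B_dilation_series (ascaled a) inv_nat (Sderivs D) (Sderivs (Bderivs D)));
      auto using inv_nat_pos.
    intros y Hy. apply B_S_anticommute; auto. }
  (* B u = - T(c) S T(a) (B f) *)
  assert (HBu : forall x, 0 < x -> opB (Du O) Du x = Copp (Du2 O x)).
  { intros x Hx. apply (B_dilation_series c INR H H2); auto using INR_pos. }
  exists (Du O), Du. split; [|split; [|split; [|split]]]; auto.
  - apply (inL2_transfer (Du2 O)); auto. intros x Hx.
    rewrite <- (Cnorm_Ci (Cadd _ _)). change (Cnorm (opB (Du O) Du x) = Cnorm (Du2 O x)).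
    rewrite HBu by auto. apply Cnorm_opp.
  - destruct HF2 as [g2 [Hg2 Hconv]]. exists g2. split; auto.
    apply (L2conv_transfer _ (Du2 O)); auto.
    intros x Hx. rewrite HBu by auto. apply Cext; simpl; ring.
Qed.
End Construction.

Lemma Rpower_ge1 n e : (1 <= n)%nat -> 0 < e -> 1 <= Rpower (INR n) e.
Proof.
  intros Hn He. rewrite <- (Rpower_O (INR n)) by (apply lt_0_INR; lia).
  apply Rle_Rpower; [apply (le_INR 1); lia|lra].
Qed.

Lemma abs_summable_weakened (a : nat -> Cplx) eps : 0 < eps ->
  abs_summable (fun n => Cnorm (a n) * Rpower (INR n) eps) -> bounded_sums (fun n => Cnorm (a n)).
Proof.
  intros heps hsa.
  assert (Hnn : nonneg_terms (fun n => Cnorm (a n) * Rpower (INR n) eps)).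
  { intros n Hn. pose proof (Rpower_ge1 n eps Hn heps). pose proof (Cnorm_nonneg (a n)). nra. }
  destruct (abs_summable_bounded _ Hnn hsa) as [W HW]. exists W. intros N.
  eapply Rle_trans; [|apply (HW N)]. apply Rsum_le. intros n Hn.
  pose proof (Rpower_ge1 n eps Hn heps). pose proof (Cnorm_nonneg (a n)). nra.
Qed.

Lemma conj_weights_bounded (b : nat -> Cplx) :
  abs_summable (fun n => Cnorm (b n) / sqrt (INR n)) -> bounded_sums (cweight (conj_seq b)).
Proof.
  intros hsb. replace (cweight (conj_seq b)) with (fun n => Cnorm (b n) / sqrt (INR n)).
  - apply abs_summable_bounded; auto. intros n _. apply (cweight_nonneg b).
  - extensionality n. unfold cweight, conj_seq. rewrite Cnorm_conj. reflexivity.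
Qed.

Theorem proposition8 (a b : nat -> Cplx) (eps K0 K1 : R) (N : nat)
  (ha1 : a 1%nat <> Czero)
  (heps : 0 < eps)
  (hsa : abs_summable (fun n => Cnorm (a n) * Rpower (INR n) eps))
  (hb : is_conv_inverse a b)
  (hsb : abs_summable (fun n => Cnorm (b n) / sqrt (INR n)))
  (hL : forall x y l1 l2, Rabs y <= 1/2 + eps/2 ->
          LS a (mkC (1/2 - y) x) l1 -> LS a (mkC (1/2 + y) x) l2 ->
          l2 <> Czero /\ Cnorm (Cdiv l1 l2) <= K0 + K1 * Rabs x ^ N)
  (f : R -> Cplx) (Df : nat -> R -> Cplx) (hf : in_S0 f Df) :
  exists (u : R -> Cplx) (Du : nat -> R -> Cplx),
    is_F_image a b f u /\
    is_derivs u Du /\ inL2 u /\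
    inL2 (fun x => Cadd (Cscal x (Du 1%nat x)) (Cscal (/ 2) (u x))) /\
    is_F_image a b (opB f Df) (fun x => Copp (opB u Du x)).
Proof.
  exact (F_B_anticommute a (conj_seq b) (abs_summable_weakened a eps heps hsa)
           (conj_weights_bounded b hsb) f Df hf).
Qed.
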